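(* Let $u_1,u_2,w_1,w_2$ be distinct vertices of $F_4$ such that $w_1u_1$, $u_1u_2$ and $u_2w_2$ are edges of $F_4$. Let $H$ be obtained from $F_4$ by subdividing the edge $u_1u_2$ with a new vertex $w_3$, adding a further new vertex $v$, and joining $v$ to $w_1$, $w_2$ and $w_3$. Then $H$ contains $K_{3,4}$ as a minor.
   Context: $F_4$ is the graph with vertex set $\{f^1,f^2\}\cup\{f^i_j: i\in\{1,2\}, j\in\{1,2,3,4\}\}$ and the 16 edges: for each $i\in\{1,2\}$, $f^if^i_1$, $f^if^i_2$, $f^if^i_4$, $f^i_3f^i_1$, $f^i_3f^i_2$, $f^i_3f^i_4$; and $f^1_jf^2_{5-j}$ for $j=1,2,3,4$. *)

From mathcomp Require Import all_boot.
Set Implicit Arguments. Unset Strict Implicit. Unset Printing Implicit Defensive.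

Definition induced_rel (T : finType) (e : rel T) (S : {set T}) : rel T :=
  fun x y => [&& x \in S, y \in S & e x y].

Definition connected_in (T : finType) (e : rel T) (S : {set T}) : Prop :=
  forall x y, x \in S -> y \in S -> connect (induced_rel e S) x y.

Definition is_minor (T' : finType) (e' : rel T') (T : finType) (e : rel T) : Prop :=
  exists phi : T' -> {set T},
    [/\ forall x, phi x != set0,
        forall x y, x != y -> [disjoint phi x & phi y],
        forall x, connected_in e (phi x) &
        forall x y, e' x y -> exists a b, [/\ a \in phi x, b \in phi y & e a b]].

Definition K34_V := ('I_3 + 'I_4)%type.
Definition K34_adj : rel K34_V := fun x y =>
  match x, y with
  | inl _, inr _ | inr _, inl _ => true
  | _, _ => false
  end.

(* Vertex (i, 0) is f^{i+1}; vertex (i, j) with 1 <= j <= 4 is f^{i+1}_j. *)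
Definition F4_V := ('I_2 * 'I_5)%type.

(* Inside copy i: f^i and f^i_3 are both adjacent to f^i_1, f^i_2, f^i_4. *)
Definition F4_inner (j j' : nat) : bool :=
  (j \in [:: 0; 3]) && (j' \in [:: 1; 2; 4]).

Definition F4_adj : rel F4_V := fun a b =>
  let: (i, j) := a in let: (i', j') := b in
  if i == i' then F4_inner j j' || F4_inner j' j
  else [&& j != 0 :> nat, j' != 0 :> nat & (j + j' == 5)%N].

(* Vertices: Some (Some x) = old vertex x of F_4, Some None = w3, None = v. *)
Definition H_V := option (option F4_V).

Definition H_adj (u1 u2 w1 w2 : F4_V) : rel H_V := fun x y =>
  match x, y with
  | Some (Some a), Some (Some b) =>
      F4_adj a b && ~~ (((a == u1) && (b == u2)) || ((a == u2) && (b == u1)))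
  | Some (Some a), Some None | Some None, Some (Some a) => (a == u1) || (a == u2)
  | None, Some (Some a) | Some (Some a), None => (a == w1) || (a == w2)
  | None, Some None | Some None, None => true
  | _, _ => false
  end.

(* H has only twelve vertices, so the statement is a finite check.  For each
   admissible path w1 u1 u2 w2 we exhibit seven branch sets of H: each is
   listed in an order in which every vertex after the first is adjacent to an
   earlier one (hence it is connected), they are pairwise disjoint, and some
   edge of H joins the branch sets of any two vertices on opposite sides of
   K_{3,4}. *)

From mathcomp Require Import all_boot zmodp.

Set Implicit Arguments.
Unset Strict Implicit.
Unset Printing Implicit Defensive.

Section BranchSets.

Variables (T : finType) (e : rel T).

Fixpoint grows_from (pre s : seq T) : bool :=
  if s is y :: s' then has (fun z => e z y && e y z) pre && grows_from (y :: pre) s'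
  else true.

Section Induced.

Variable A : {set T}.

Let induced_sym : rel T := [rel x y | induced_rel e A x y && induced_rel e A y x].

Lemma connect_induced_sym_sym : connect_sym induced_sym.
Proof. by apply: sym_connect_sym => x y; rewrite /induced_sym /= andbC. Qed.

Lemma grows_from_connect_sym x0 pre s :
  {subset pre ++ s <= A} -> grows_from pre s ->
  {in pre, forall z, connect induced_sym x0 z} ->
  {in pre ++ s, forall z, connect induced_sym x0 z}.
Proof.
elim: s pre => [|y s IHs] pre /=; first by rewrite cats0.
move=> sub_A /andP[/hasP[z z_pre /andP[ezy eyz]] grow_s] conn_pre.
have shift : pre ++ y :: s =i (y :: pre) ++ s.
  by move=> a; rewrite /= !(mem_cat, inE) orbCA.
have [zA yA] : z \in A /\ y \in A.
  by split; apply: sub_A; rewrite mem_cat ?z_pre // mem_head orbT.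
have conn_y : connect induced_sym x0 y.
  apply: connect_trans (conn_pre z z_pre) (connect1 _).
  by rewrite /induced_sym /= /induced_rel zA yA ezy eyz.
move=> a; rewrite shift; apply: (IHs _ _ grow_s) => [b | b].
  by rewrite -shift; apply: sub_A.
by rewrite inE => /predU1P[-> | /conn_pre].
Qed.

Lemma grows_from_connect x0 s :
  {subset x0 :: s <= A} -> grows_from [:: x0] s ->
  {in x0 :: s &, forall x y, connect (induced_rel e A) x y}.
Proof.
move=> sub_A grow_s.
have conn : {in x0 :: s, forall z, connect induced_sym x0 z}.
  by apply: (@grows_from_connect_sym x0 [:: x0]) => // z /[1!inE] /eqP ->.
move=> x y xs ys; apply: (@connect_sub _ induced_sym) => [a b /andP[eab _]|].
  exact: connect1.
by apply: connect_trans (conn y ys); rewrite connect_induced_sym_sym; apply: conn.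
Qed.

End Induced.

Lemma connected_in_grows_from x0 s : grows_from [:: x0] s -> connected_in e [set x in x0 :: s].
Proof.
move=> grow_s x y; rewrite !inE.
by apply: (grows_from_connect _ grow_s) => z; rewrite in_set.
Qed.

Variables (T' : finType) (e' : rel T').

Definition minor_certificate (dom : seq T') (S : T' -> seq T) : bool :=
  [&& all (fun x => if S x is x0 :: s then grows_from [:: x0] s else false) dom,
      all2rel (fun x y => (x == y) || ~~ has (fun a => a \in S y) (S x)) dom &
      all2rel (fun x y => e' x y ==> has (fun a => has (e a) (S y)) (S x)) dom].

Lemma minor_certificateP dom S :
  (forall x, x \in dom) -> minor_certificate dom S -> is_minor e' e.
Proof.
move=> dom_all /and3P[/allP conn_S /allrelP disj_S /allrelP edge_S].
exists (fun x => [set a in S x]); split.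
- move=> x; have := conn_S x (dom_all x); case: (S x) => [|a s] // _.
  by apply/set0Pn; exists a; rewrite inE mem_head.
- move=> x y /negPf neq_xy; have := disj_S x y (dom_all x) (dom_all y).
  rewrite neq_xy /= => /hasPn disj_xy; apply/pred0P => a /=; rewrite !inE.
  by apply/negbTE/nandP; case Sxa: (a \in S x); [right; apply: disj_xy | left].
- move=> x; have := conn_S x (dom_all x); case: (S x) => [|x0 s] //.
  exact: connected_in_grows_from.
- move=> x y exy; have := edge_S x y (dom_all x) (dom_all y).
  rewrite exy => /hasP[a Sxa /hasP[b Syb eab]].
  by exists a, b; rewrite !inE.
Qed.

End BranchSets.

Definition ord_list (n : nat) : seq 'I_n.+1 := [seq inZp i | i <- iota 0 n.+1].

Lemma mem_ord_list n (i : 'I_n.+1) : i \in ord_list n.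
Proof. by apply/mapP; exists (val i); rewrite ?valZpK // mem_iota add0n ltn_ord. Qed.

Definition F4_list : seq F4_V := [seq (i, j) | i <- ord_list 1, j <- ord_list 4].

Lemma mem_F4_list (a : F4_V) : a \in F4_list.
Proof. by case: a => i j; apply: allpairs_f; apply: mem_ord_list. Qed.

Definition K34_list : seq K34_V := map inl (ord_list 2) ++ map inr (ord_list 3).

Lemma mem_K34_list (x : K34_V) : x \in K34_list.
Proof. by case: x => i; rewrite mem_cat map_f ?orbT ?mem_ord_list. Qed.

Definition F4_path (u1 u2 w1 w2 : F4_V) : bool :=
  [&& uniq [:: u1; u2; w1; w2], F4_adj w1 u1, F4_adj u1 u2 & F4_adj u2 w2].

(* Vertices of H are coded by 0, ..., 11: the vertex (i, j) of F_4 by 5 i + j,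
   then w3 by 10 and v by 11.  A certificate pairs the codes of a path
   [:: u1; u2; w1; w2] with the branch sets of inl 0, inl 1, inl 2, inr 0, ...,
   inr 3, each listed root first as required by grows_from. *)
Definition F4_code (a : F4_V) : nat := 5 * a.1 + a.2.

Definition H_vertex (n : nat) : H_V :=
  if n < 10 then Some (Some (inZp (n %/ 5), inZp n))
  else if n == 10 then Some None else None.

Definition K34_index (x : K34_V) : nat :=
  match x with inl i => i | inr j => 3 + j end.

Definition F4_swap_copies (a : F4_V) : F4_V := (rev_ord a.1, a.2).

Definition F4_swap_ends (a : F4_V) : F4_V :=
  (a.1, inZp (if a.2 == 1 :> nat then 4 else if a.2 == 4 :> nat then 1 else a.2)).

Definition F4_symmetries : seq (F4_V -> F4_V) :=
  [:: id; F4_swap_copies; F4_swap_ends; F4_swap_copies \o F4_swap_ends].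

(* One certificate per orbit of the 160 paths under the automorphism group of
   F_4 (the Klein group listed in F4_symmetries) and the reversal
   (u1, u2, w1, w2) |-> (u2, u1, w2, w1), which does not change H.  The branch
   sets for any other path are the images of stored ones under an involutive
   automorphism; they are checked directly, so no transport lemma is needed. *)
Definition H_certificates : seq (seq nat * seq (seq nat)) := [::
  ([:: 0; 1; 2; 3], [:: [:: 1; 9; 5; 10]; [:: 2; 8]; [:: 3; 4]; [:: 11]; [:: 6]; [:: 0]; [:: 7]]);
  ([:: 0; 1; 2; 9], [:: [:: 2; 3]; [:: 0; 4; 6; 10]; [:: 9]; [:: 1]; [:: 11]; [:: 8]; [:: 5; 7]]);
  ([:: 0; 1; 4; 3], [:: [:: 1; 9; 10]; [:: 4; 6]; [:: 2; 3]; [:: 5; 7]; [:: 11]; [:: 8]; [:: 0]]);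
  ([:: 0; 1; 4; 9], [:: [:: 3; 4]; [:: 0; 2; 8; 10]; [:: 5; 9]; [:: 1]; [:: 11]; [:: 6]; [:: 7]]);
  ([:: 0; 2; 1; 3], [:: [:: 3; 4]; [:: 2; 8; 10]; [:: 1; 9; 5]; [:: 11]; [:: 6]; [:: 0]; [:: 7]]);
  ([:: 0; 2; 1; 8], [:: [:: 0; 4; 6; 5; 10]; [:: 1; 3]; [:: 8]; [:: 2]; [:: 11]; [:: 9]; [:: 7]]);
  ([:: 1; 3; 0; 2], [:: [:: 2; 8; 11]; [:: 3; 4]; [:: 1; 9; 5]; [:: 10]; [:: 6]; [:: 0]; [:: 7]]);
  ([:: 1; 3; 0; 4], [:: [:: 1; 9]; [:: 2; 3]; [:: 4; 6; 11]; [:: 10]; [:: 5; 7]; [:: 0]; [:: 8]]);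
  ([:: 1; 3; 0; 7], [:: [:: 1; 9]; [:: 4; 6]; [:: 7]; [:: 0; 11]; [:: 5]; [:: 3; 10]; [:: 8]]);
  ([:: 1; 3; 9; 2], [:: [:: 0; 2; 8]; [:: 5; 9]; [:: 3; 10]; [:: 1]; [:: 11]; [:: 4; 6]; [:: 7]]);
  ([:: 1; 3; 9; 4], [:: [:: 3; 7; 10]; [:: 4; 6]; [:: 9]; [:: 11]; [:: 0; 1]; [:: 8]; [:: 5]]);
  ([:: 1; 3; 9; 7], [:: [:: 2; 8]; [:: 4; 6; 5]; [:: 1; 10]; [:: 3]; [:: 9]; [:: 7; 11]; [:: 0]]);
  ([:: 1; 9; 0; 5], [:: [:: 3]; [:: 6; 8; 9; 10]; [:: 0; 11]; [:: 2]; [:: 1]; [:: 4]; [:: 5; 7]]);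
  ([:: 1; 9; 0; 8], [:: [:: 1; 3; 10]; [:: 8]; [:: 0; 4; 6; 5]; [:: 2]; [:: 11]; [:: 9]; [:: 7]]);
  ([:: 1; 9; 3; 8], [:: [:: 3]; [:: 6; 8]; [:: 0; 1; 10]; [:: 2]; [:: 11]; [:: 5; 7; 9]; [:: 4]]);
  ([:: 2; 3; 0; 1], [:: [:: 2; 8]; [:: 3; 4]; [:: 1; 9; 5; 11]; [:: 10]; [:: 6]; [:: 0]; [:: 7]]);
  ([:: 2; 3; 0; 7], [:: [:: 1; 9]; [:: 4; 6]; [:: 7]; [:: 3]; [:: 0; 11]; [:: 5]; [:: 8]]);
  ([:: 2; 3; 8; 1], [:: [:: 3; 10]; [:: 6; 8]; [:: 0; 1]; [:: 2]; [:: 11]; [:: 5; 7; 9]; [:: 4]]);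
  ([:: 2; 3; 8; 7], [:: [:: 4; 6]; [:: 2; 10]; [:: 1; 9]; [:: 3]; [:: 5; 7; 11]; [:: 8]; [:: 0]]);
  ([:: 2; 8; 0; 6], [:: [:: 0; 1; 9]; [:: 6]; [:: 2; 3; 10]; [:: 4]; [:: 11]; [:: 8]; [:: 5; 7]]);
  ([:: 2; 8; 0; 7], [:: [:: 1; 9]; [:: 4; 6]; [:: 7]; [:: 3]; [:: 0; 11]; [:: 5]; [:: 8]]);
  ([:: 2; 8; 3; 6], [:: [:: 3]; [:: 0; 4; 6]; [:: 8; 9; 10]; [:: 2]; [:: 1]; [:: 11]; [:: 5; 7]]);
  ([:: 2; 8; 3; 7], [:: [:: 4; 6]; [:: 2; 10]; [:: 1; 9]; [:: 3]; [:: 5; 7; 11]; [:: 8]; [:: 0]])].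

Definition H_branch_sets (u1 u2 w1 w2 : F4_V) : K34_V -> seq H_V :=
  let keys g := [:: map (F4_code \o g) [:: u1; u2; w1; w2];
                    map (F4_code \o g) [:: u2; u1; w2; w1]] in
  let found := [seq (g, c.2) | g <- F4_symmetries,
                               c <- [seq c <- H_certificates | c.1 \in keys g]] in
  if found is (g, sets) :: _ then
    fun x => [seq omap (omap g) (H_vertex n) | n <- nth [::] sets (K34_index x)]
  else fun=> [::].

Lemma H_branch_sets_certified u1 u2 w1 w2 :
  F4_path u1 u2 w1 w2 ->
  minor_certificate (H_adj u1 u2 w1 w2) K34_adj K34_list (H_branch_sets u1 u2 w1 w2).
Proof.
(* [if] rather than [==>]: vm_compute is call by value, and [==>] would check
   a certificate for each of the 10^4 quadruples. *)
have all_paths : all (fun u1 => all (fun u2 => all (fun w1 => all (fun w2 =>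
    if F4_path u1 u2 w1 w2 then
      minor_certificate (H_adj u1 u2 w1 w2) K34_adj K34_list (H_branch_sets u1 u2 w1 w2)
    else true) F4_list) F4_list) F4_list) F4_list.
  by vm_compute.
move: all_paths => /allP/(_ u1 (mem_F4_list u1)) /allP/(_ u2 (mem_F4_list u2)).
move=> /allP/(_ w1 (mem_F4_list w1)) /allP/(_ w2 (mem_F4_list w2)).
by case: (F4_path u1 u2 w1 w2).
Qed.

Theorem lemma4p15 (u1 u2 w1 w2 : F4_V) :
  uniq [:: u1; u2; w1; w2] ->
  F4_adj w1 u1 -> F4_adj u1 u2 -> F4_adj u2 w2 ->
  is_minor K34_adj (H_adj u1 u2 w1 w2).
Proof.
move=> uniq_path w1u1 u1u2 u2w2.
apply: (minor_certificateP mem_K34_list); apply: H_branch_sets_certified.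
exact/and4P.
Qed.
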